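(* Let $F$ be an $F_\sigma$ subset of $[0,1]$ with $0\in F$, and let $k\geq 3$ be an integer. Then there exist non-empty, convex and closed subsets $A_1,A_2,\dots,A_k\subset\mathbb R^3$ such that $$F=\{\alpha\in[0,1]:P_{A_k}^\alpha P_{A_{k-1}}^\alpha\cdots P_{A_1}^\alpha\text{ has a fixed point}\}.$$
   Context: For a non-empty, convex, closed subset $A$ of a real Hilbert space $H$ (here $H=\mathbb R^3$ with the Euclidean inner product), $P_A:H\to A$ denotes the metric (nearest-point) projection onto $A$. For $\alpha\in[0,1]$, the $\alpha$-relaxed projection onto $A$ is the map $P_A^\alpha:H\to H$, $P_A^\alpha(x)=\alpha P_A(x)+(1-\alpha)x$. Compositions are written as products. *)

From Stdlib Require Import Reals Lra Rtopology ClassicalEpsilon.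
Open Scope R_scope.

Definition vec3 : Type := (R * R * R)%type.

Definition vadd (x y : vec3) : vec3 :=
  let '(x1, x2, x3) := x in let '(y1, y2, y3) := y in (x1 + y1, x2 + y2, x3 + y3).
Definition vscale (a : R) (x : vec3) : vec3 :=
  let '(x1, x2, x3) := x in (a * x1, a * x2, a * x3).
Definition vsub (x y : vec3) : vec3 := vadd x (vscale (-1) y).
Definition inner (x y : vec3) : R :=
  let '(x1, x2, x3) := x in let '(y1, y2, y3) := y in x1 * y1 + x2 * y2 + x3 * y3.
Definition vnorm (x : vec3) : R := sqrt (inner x x).
Definition vdist (x y : vec3) : R := vnorm (vsub x y).

Definition nonempty3 (A : vec3 -> Prop) : Prop := exists x, A x.
Definition convex3 (A : vec3 -> Prop) : Prop :=
  forall x y t, A x -> A y -> 0 <= t <= 1 -> A (vadd (vscale t x) (vscale (1 - t) y)).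
Definition open3 (U : vec3 -> Prop) : Prop :=
  forall x, U x -> exists eps, 0 < eps /\ forall y, vdist y x < eps -> U y.
Definition closed3 (A : vec3 -> Prop) : Prop := open3 (fun x => ~ A x).

Definition is_nearest (A : vec3 -> Prop) (x p : vec3) : Prop :=
  A p /\ forall a, A a -> vdist x p <= vdist x a.

(* metric projection P_A (well-defined & unique for nonempty closed convex A) *)
Definition proj (A : vec3 -> Prop) (x : vec3) : vec3 :=
  epsilon (inhabits (0, 0, 0)) (fun p => is_nearest A x p).

Definition relaxed_proj (alpha : R) (A : vec3 -> Prop) (x : vec3) : vec3 :=
  vadd (vscale alpha (proj A x)) (vscale (1 - alpha) x).

(* comp_relaxed A alpha n = P_{A n}^alpha ... P_{A 1}^alpha  (identity for n = 0) *)
Fixpoint comp_relaxed (A : nat -> vec3 -> Prop) (alpha : R) (n : nat) (x : vec3) : vec3 :=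
  match n with
  | O => x
  | S m => relaxed_proj alpha (A (S m)) (comp_relaxed A alpha m x)
  end.

Definition F_sigma (F : R -> Prop) : Prop :=
  exists C : nat -> R -> Prop,
    (forall n, closed_set (C n)) /\ (forall a, F a <-> exists n, C n a).

From Stdlib Require Import Reals Lra Psatz Rtopology ClassicalEpsilon Classical.
Open Scope R_scope.

(* Take A_1 = {x_2 = 0}, A_2 = {x_1 = x_2 = 0}, A_i = R^3 for i > 3, and for A_3 a convex
   set lying over the hyperbola region {u/s + s v >= 2 for all s > 0} = {u, v > 0, uv >= 1}.
   For α > 0 the first two relaxed projections send x to y = ((1-α) x_1, (1-α)^2 x_2, x_3),
   and x is fixed by the composition iff p = P_{A_3} y satisfies
   x = (p_1 / (2-α), p_2 / (1 + (1-α) + (1-α)^2), p_3).  Then y - p = -(p_1, r(α) p_2, 0)/(2-α),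
   and the normal-cone condition at p pins (p_1, p_2) to the point (t, 1/t) of the hyperbola
   with t^4 = r(α).  So a fixed point exists iff A_3 has points above (t, 1/t).  The height of
   A_3 is a supremum of affine cuts built from closed sets C_n with F = ∪ C_n: above (t, 1/t) it
   is at most n when α ∈ C_n, and infinite when α ∉ F, since α then stays at positive distance
   from C_0 ∪ ... ∪ C_N and r separates parameters quantitatively. *)

Lemma vec3_eq (a1 a2 a3 b1 b2 b3 : R) :
  a1 = b1 -> a2 = b2 -> a3 = b3 -> (a1, a2, a3) = (b1, b2, b3).
Proof. intros -> -> ->; reflexivity. Qed.

Definition dist2 (x y : vec3) : R := inner (vsub x y) (vsub x y).

Lemma dist2_coords x1 x2 x3 y1 y2 y3 :
  dist2 (x1, x2, x3) (y1, y2, y3) =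
  (x1 - y1) * (x1 - y1) + (x2 - y2) * (x2 - y2) + (x3 - y3) * (x3 - y3).
Proof. unfold dist2; simpl; ring. Qed.

Lemma inner_self_ge0 x : 0 <= inner x x.
Proof. destruct x as [[a b] c]; simpl; nra. Qed.

Lemma dist2_ge0 x y : 0 <= dist2 x y.
Proof. apply inner_self_ge0. Qed.

Lemma dist2_sym x y : dist2 x y = dist2 y x.
Proof. destruct x as [[? ?] ?], y as [[? ?] ?]; rewrite !dist2_coords; ring. Qed.

Lemma dist2_le0_eq x y : dist2 x y <= 0 -> x = y.
Proof.
  destruct x as [[x1 x2] x3], y as [[y1 y2] y3]; rewrite dist2_coords; intro H.
  pose proof (Rle_0_sqr (x1 - y1)); pose proof (Rle_0_sqr (x2 - y2));
  pose proof (Rle_0_sqr (x3 - y3)); unfold Rsqr in *.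
  assert (x1 = y1) by nra; assert (x2 = y2) by nra; assert (x3 = y3) by nra; congruence.
Qed.

Lemma vdist_le_iff x p a : vdist x p <= vdist x a <-> dist2 x p <= dist2 x a.
Proof.
  split; intro H.
  - apply sqrt_le_0; auto using dist2_ge0.
  - apply sqrt_le_1_alt; exact H.
Qed.

Lemma inner_vsub_r c x y : inner c (vsub x y) = inner c x - inner c y.
Proof. destruct c as [[? ?] ?], x as [[? ?] ?], y as [[? ?] ?]; simpl; ring. Qed.

Lemma inner_cauchy_schwarz c w : Rabs (inner c w) <= vnorm c * vnorm w.
Proof.
  unfold vnorm; rewrite <- sqrt_mult by apply inner_self_ge0.
  rewrite <- sqrt_Rsqr_abs; apply sqrt_le_1_alt; unfold Rsqr.
  destruct c as [[c1 c2] c3], w as [[w1 w2] w3]; simpl.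
  (* Lagrange's identity *)
  pose proof (Rle_0_sqr (c1 * w2 - c2 * w1)); pose proof (Rle_0_sqr (c1 * w3 - c3 * w1));
  pose proof (Rle_0_sqr (c2 * w3 - c3 * w2)); unfold Rsqr in *; nra.
Qed.

Definition halfspace_inter (H : vec3 -> R -> Prop) (x : vec3) : Prop :=
  forall c c0, H c c0 -> c0 <= inner c x.

Lemma halfspace_inter_convex H : convex3 (halfspace_inter H).
Proof.
  intros [[x1 x2] x3] [[y1 y2] y3] t Hx Hy Ht [[c1 c2] c3] c0 Hc.
  specialize (Hx _ _ Hc); specialize (Hy _ _ Hc); simpl in *; nra.
Qed.

Lemma halfspace_inter_closed H : closed3 (halfspace_inter H).
Proof.
  intros x Hx.
  apply not_all_ex_not in Hx as [c Hx]; apply not_all_ex_not in Hx as [c0 Hx].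
  apply imply_to_and in Hx as [Hc Hlt]; apply Rnot_le_lt in Hlt.
  pose proof (sqrt_pos (inner c c)) as Hnc; fold (vnorm c) in Hnc.
  exists ((c0 - inner c x) / (vnorm c + 1)); split.
  - apply Rdiv_lt_0_compat; lra.
  - intros y Hy Hin; specialize (Hin _ _ Hc).
    assert (Hd : 0 <= vdist y x) by apply sqrt_pos.
    assert (Hcs : inner c y - inner c x <= vnorm c * vdist y x).
    { rewrite <- inner_vsub_r; eapply Rle_trans; [apply Rle_abs | apply inner_cauchy_schwarz]. }
    apply (Rmult_lt_compat_l (vnorm c + 1)) in Hy; [|lra].
    replace ((vnorm c + 1) * ((c0 - inner c x) / (vnorm c + 1))) with (c0 - inner c x) in Hy
      by (field; lra).
    nra.
Qed.

Lemma nearest_variational A x p : convex3 A -> is_nearest A x p ->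
  forall a, A a -> inner (vsub x p) (vsub a p) <= 0.
Proof.
  intros HA [Hp Hmin] a Ha.
  set (c := inner (vsub x p) (vsub a p)); set (L := inner (vsub a p) (vsub a p)).
  assert (Hseg : forall t, 0 < t <= 1 -> 2 * t * c <= t * t * L).
  { intros t Ht; specialize (Hmin _ (HA a p t Ha Hp ltac:(lra))).
    apply vdist_le_iff in Hmin; unfold dist2, c, L in *.
    destruct x as [[x1 x2] x3], p as [[p1 p2] p3], a as [[a1 a2] a3]; simpl in *; nra. }
  assert (HL : 0 <= L) by apply inner_self_ge0.
  apply Rnot_lt_le; intro Hc.
  assert (Ht : 0 < c / (c + L) <= 1).
  { split; [apply Rdiv_lt_0_compat; lra|].
    apply Rmult_le_reg_r with (c + L); [lra|]; field_simplify; lra. }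
  set (t := c / (c + L)) in *; specialize (Hseg _ Ht).
  assert (Htc : t * (c + L) = c) by (unfold t; field; lra).
  assert (2 * c <= t * L) by (apply Rmult_le_reg_l with t; lra).
  nra.
Qed.

Lemma variational_nearest A x p : A p ->
  (forall a, A a -> inner (vsub x p) (vsub a p) <= 0) -> is_nearest A x p.
Proof.
  intros Hp H; split; [exact Hp|]; intros a Ha; apply vdist_le_iff.
  specialize (H a Ha); pose proof (inner_self_ge0 (vsub a p)); unfold dist2.
  destruct x as [[x1 x2] x3], p as [[p1 p2] p3], a as [[a1 a2] a3]; simpl in *; nra.
Qed.

Lemma nearest_unique A x p q : convex3 A -> is_nearest A x p -> is_nearest A x q -> p = q.
Proof.
  intros HA Hp Hq.
  pose proof (nearest_variational A x p HA Hp q (proj1 Hq)).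
  pose proof (nearest_variational A x q HA Hq p (proj1 Hp)).
  apply dist2_le0_eq; unfold dist2.
  destruct x as [[x1 x2] x3], p as [[p1 p2] p3], q as [[q1 q2] q3]; simpl in *; nra.
Qed.

Lemma inv_succ_cv0 : Un_cv (fun n => / (INR n + 1)) 0.
Proof.
  intros eps Heps; destruct (INR_archimed eps 1 Heps) as [N HN].
  exists N; intros n Hn; unfold Rdist; rewrite Rminus_0_r.
  pose proof (pos_INR n); apply le_INR in Hn.
  rewrite Rabs_right by (left; apply Rinv_0_lt_compat; lra).
  apply Rmult_lt_reg_r with (INR n + 1); [lra|].
  rewrite Rinv_l by lra; nra.
Qed.

Lemma dist2_inf A x : nonempty3 A ->
  exists m, (forall a, A a -> m <= dist2 x a) /\
            (forall eps, 0 < eps -> exists a, A a /\ dist2 x a < m + eps).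
Proof.
  intros [a0 Ha0].
  set (E := fun r => exists a, A a /\ r = - dist2 x a).
  assert (HE : bound E) by (exists 0; intros r [a [_ ->]]; pose proof (dist2_ge0 x a); lra).
  destruct (completeness E HE) as [l [Hub Hlub]]; [exists (- dist2 x a0); exists a0; auto|].
  exists (- l); split.
  - intros a Ha; assert (Hl := Hub (- dist2 x a) (ex_intro _ a (conj Ha eq_refl))); lra.
  - intros eps Heps; apply NNPP; intro Hno.
    enough (l <= l - eps) by lra.
    apply Hlub; intros r [a [Ha ->]].
    apply Rnot_lt_le; intro Hlt; apply Hno; exists a; split; [exact Ha | lra].
Qed.

Definition cv3 (s : nat -> vec3) (l : vec3) : Prop :=
  Un_cv (fun n => fst (fst (s n))) (fst (fst l)) /\
  Un_cv (fun n => snd (fst (s n))) (snd (fst l)) /\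
  Un_cv (fun n => snd (s n)) (snd l).

Definition cauchy3 (s : nat -> vec3) : Prop :=
  forall eps, 0 < eps -> exists N, forall n k, (N <= n)%nat -> (N <= k)%nat -> dist2 (s n) (s k) < eps.

Lemma Un_cv_const (c : R) : Un_cv (fun _ => c) c.
Proof. intros eps He; exists 0%nat; intros; unfold Rdist; rewrite Rminus_diag, Rabs_R0; lra. Qed.

Lemma dist2_cv3 x s l : cv3 s l -> Un_cv (fun n => dist2 x (s n)) (dist2 x l).
Proof.
  intros (H1 & H2 & H3); destruct x as [[x1 x2] x3].
  assert (Hc : forall y : vec3, dist2 (x1, x2, x3) y =
            (x1 - fst (fst y)) * (x1 - fst (fst y)) + (x2 - snd (fst y)) * (x2 - snd (fst y))
            + (x3 - snd y) * (x3 - snd y)).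
  { intros [[y1 y2] y3]; apply dist2_coords. }
  rewrite Hc; eapply Un_cv_ext; [intro n; symmetry; apply Hc|].
  apply CV_plus; [apply CV_plus|]; apply CV_mult; apply CV_minus; auto using Un_cv_const.
Qed.

Lemma cauchy_coord (u : nat -> R) (s : nat -> vec3) :
  (forall n k, (u n - u k) * (u n - u k) <= dist2 (s n) (s k)) -> cauchy3 s -> Cauchy_crit u.
Proof.
  intros Hu Hs eps Heps; destruct (Hs (eps * eps)) as [N HN]; [nra|].
  exists N; intros n k Hn Hk; specialize (HN n k Hn Hk); specialize (Hu n k); unfold Rdist.
  rewrite <- (Rabs_right eps) by lra; apply Rsqr_lt_abs_0; unfold Rsqr; lra.
Qed.

Lemma dist2_ge_coords x y :
  (fst (fst x) - fst (fst y)) * (fst (fst x) - fst (fst y)) <= dist2 x y /\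
  (snd (fst x) - snd (fst y)) * (snd (fst x) - snd (fst y)) <= dist2 x y /\
  (snd x - snd y) * (snd x - snd y) <= dist2 x y.
Proof.
  destruct x as [[x1 x2] x3], y as [[y1 y2] y3]; rewrite dist2_coords; simpl.
  pose proof (Rle_0_sqr (x1 - y1)); pose proof (Rle_0_sqr (x2 - y2));
  pose proof (Rle_0_sqr (x3 - y3)); unfold Rsqr in *; lra.
Qed.

Lemma cauchy3_cv3 s : cauchy3 s -> exists l, cv3 s l.
Proof.
  intro Hs.
  destruct (R_complete (fun n => fst (fst (s n)))) as [l1 L1].
  { apply (cauchy_coord _ s); [intros n k; apply dist2_ge_coords | exact Hs]. }
  destruct (R_complete (fun n => snd (fst (s n)))) as [l2 L2].
  { apply (cauchy_coord _ s); [intros n k; apply dist2_ge_coords | exact Hs]. }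
  destruct (R_complete (fun n => snd (s n))) as [l3 L3].
  { apply (cauchy_coord _ s); [intros n k; apply dist2_ge_coords | exact Hs]. }
  exists (l1, l2, l3); repeat split; assumption.
Qed.

Lemma closed3_cv3 A s l : closed3 A -> (forall n, A (s n)) -> cv3 s l -> A l.
Proof.
  intros HA Hs Hl; apply NNPP; intro Hnl.
  destruct (HA l Hnl) as [eps [Heps Hball]].
  assert (H0 := dist2_cv3 l s l Hl); unfold dist2 at 2 in H0.
  destruct (H0 (eps * eps)) as [N HN]; [nra|].
  apply (Hball (s N)); [|apply Hs].
  specialize (HN N (Nat.le_refl N)); unfold Rdist in HN.
  replace (inner (vsub l l) (vsub l l)) with 0 in HN
    by (destruct l as [[? ?] ?]; simpl; ring).
  rewrite Rminus_0_r, Rabs_right in HN by (apply Rle_ge, dist2_ge0).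
  unfold vdist, vnorm; fold (dist2 (s N) l); rewrite dist2_sym.
  rewrite <- (sqrt_square eps) by lra; apply sqrt_lt_1_alt; split; [apply dist2_ge0 | exact HN].
Qed.

Lemma dist2_midpoint x p q :
  dist2 p q = 2 * dist2 x p + 2 * dist2 x q - 4 * dist2 x (vadd (vscale (1/2) p) (vscale (1 - 1/2) q)).
Proof. destruct x as [[? ?] ?], p as [[? ?] ?], q as [[? ?] ?]; unfold dist2; simpl; field. Qed.

Lemma nearest_exists A x : nonempty3 A -> convex3 A -> closed3 A -> exists p, is_nearest A x p.
Proof.
  intros Hne HA Hcl.
  destruct (dist2_inf A x Hne) as [m [Hlow Happ]].
  destruct (choice (fun n a => A a /\ dist2 x a < m + / (INR n + 1))) as [s Hs].
  { intro n; apply Happ, Rinv_0_lt_compat; pose proof (pos_INR n); lra. }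
  assert (Hcau : cauchy3 s).
  { intros eps Heps; destruct (inv_succ_cv0 (eps / 4)) as [N HN]; [lra|].
    exists N; intros n k Hn Hk.
    specialize (HN n Hn) as Hn'; specialize (HN k Hk) as Hk'; unfold Rdist in Hn', Hk'.
    rewrite Rminus_0_r in Hn', Hk'; apply Rabs_def2 in Hn', Hk'.
    destruct (Hs n) as [An Dn], (Hs k) as [Ak Dk].
    pose proof (Hlow _ (HA _ _ (1/2) An Ak ltac:(lra))).
    rewrite (dist2_midpoint x); lra. }
  destruct (cauchy3_cv3 s Hcau) as [l Hl].
  exists l; split.
  - apply (closed3_cv3 A s l Hcl); [intro n; apply Hs | exact Hl].
  - intros a Ha; apply vdist_le_iff; apply Rle_trans with m; [|apply Hlow, Ha].
    replace m with (m + 0) by ring.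
    apply (Rle_cv_lim (Un := fun n => dist2 x (s n)) (Vn := fun n => m + / (INR n + 1))).
    + intro n; left; apply Hs.
    + apply dist2_cv3, Hl.
    + apply CV_plus; [apply Un_cv_const | apply inv_succ_cv0].
Qed.

Lemma proj_nearest A x : nonempty3 A -> convex3 A -> closed3 A -> is_nearest A x (proj A x).
Proof. intros; unfold proj; apply epsilon_spec, nearest_exists; assumption. Qed.

Lemma proj_eq A x p : convex3 A -> A p ->
  (forall a, A a -> inner (vsub x p) (vsub a p) <= 0) -> proj A x = p.
Proof.
  intros HA Hp H; assert (Hn := variational_nearest A x p Hp H).
  apply (nearest_unique A x); [exact HA | unfold proj; apply epsilon_spec; exists p | ]; exact Hn.
Qed.

(* The fixed-point residual -(p_1, r p_2, 0) is normal to the hyperbola uv = 1 at (t, 1/t)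
   exactly when r = t^4. *)
Definition normal_ratio (al : R) : R := (2 - al) ^ 2 / (1 + (1 - al) + (1 - al) ^ 2).

Definition hyp_param (al : R) : R := sqrt (sqrt (normal_ratio al)).

Definition tangent_gap (s u v : R) : R := u / s + s * v - 2.

Lemma normal_ratio_range al : 0 <= al <= 1 -> 1 <= normal_ratio al <= 4 / 3.
Proof.
  intro Hal; unfold normal_ratio; set (b := 1 - al).
  replace (2 - al) with (1 + b) by (unfold b; ring).
  assert (0 <= b <= 1) by (unfold b; lra); assert (0 < 1 + b + b ^ 2) by nra.
  split; [apply Rmult_le_reg_r with (1 + b + b ^ 2) | apply Rmult_le_reg_r with (1 + b + b ^ 2)];
    try lra; unfold Rdiv; rewrite Rmult_assoc, Rinv_l by lra; nra.
Qed.

Lemma normal_ratio_sep a c : 0 <= a <= 1 -> 0 <= c <= 1 ->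
  (a - c) ^ 2 * a ^ 2 / 81 <= (normal_ratio a - normal_ratio c) ^ 2.
Proof.
  intros Ha Hc; unfold normal_ratio.
  set (b := 1 - a); set (d := 1 - c).
  replace (2 - a) with (1 + b) by (unfold b; ring); replace (2 - c) with (1 + d) by (unfold d; ring).
  replace (a - c) with (d - b) by (unfold b, d; ring); replace a with (1 - b) by (unfold b; ring).
  assert (0 <= b <= 1) by (unfold b; lra); assert (0 <= d <= 1) by (unfold d; lra).
  assert (Hb : 0 < 1 + b + b ^ 2 <= 3) by nra; assert (Hd : 0 < 1 + d + d ^ 2 <= 3) by nra.
  set (P := (1 + b + b ^ 2) * (1 + d + d ^ 2)).
  assert (HP : 0 < P <= 9) by (unfold P; split; [apply Rmult_lt_0_compat | nra]; lra).
  replace ((1 + b) ^ 2 / (1 + b + b ^ 2) - (1 + d) ^ 2 / (1 + d + d ^ 2))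
    with ((b - d) * (1 - b * d) / P) by (unfold P; field; lra).
  replace (((b - d) * (1 - b * d) / P) ^ 2) with ((d - b) ^ 2 * (1 - b * d) ^ 2 / (P * P))
    by (field; lra).
  unfold Rdiv; apply Rmult_le_compat.
  - apply Rmult_le_pos; apply pow2_ge_0.
  - left; apply Rinv_0_lt_compat; lra.
  - apply Rmult_le_compat_l; [apply pow2_ge_0 | apply pow_incr; nra].
  - apply Rinv_le_contravar; [apply Rmult_lt_0_compat |]; nra.
Qed.

Lemma hyp_param_pow4 al : 0 <= al <= 1 -> hyp_param al ^ 4 = normal_ratio al.
Proof.
  intro Hal; pose proof (normal_ratio_range al Hal); unfold hyp_param.
  replace (sqrt (sqrt (normal_ratio al)) ^ 4)
    with (sqrt (sqrt (normal_ratio al)) * sqrt (sqrt (normal_ratio al))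
          * (sqrt (sqrt (normal_ratio al)) * sqrt (sqrt (normal_ratio al)))) by ring.
  rewrite sqrt_sqrt by apply sqrt_pos; apply sqrt_sqrt; lra.
Qed.

Lemma hyp_param_range al : 0 <= al <= 1 -> 1 <= hyp_param al <= 2.
Proof.
  intro Hal; pose proof (normal_ratio_range al Hal) as Hr.
  rewrite <- hyp_param_pow4 in Hr by exact Hal.
  assert (0 <= hyp_param al) by apply sqrt_pos; set (t := hyp_param al) in *.
  split; apply Rnot_lt_le; intro Ht.
  - assert (t ^ 2 < 1) by nra; nra.
  - assert (4 < t ^ 2) by nra; nra.
Qed.

Lemma pow4_diff_sq t u : 1 <= t <= 2 -> 1 <= u <= 2 -> (t ^ 4 - u ^ 4) ^ 2 <= 1024 * (t - u) ^ 2.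
Proof.
  intros Ht Hu.
  replace ((t ^ 4 - u ^ 4) ^ 2) with ((t - u) ^ 2 * ((t + u) * (t ^ 2 + u ^ 2)) ^ 2) by ring.
  rewrite Rmult_comm; apply Rmult_le_compat_r; [apply pow2_ge_0|].
  assert (0 <= (t + u) * (t ^ 2 + u ^ 2) <= 32) by (split; nra).
  replace 1024 with (32 ^ 2) by ring; apply pow_incr; lra.
Qed.

Lemma tangent_gap_hyperbola s t : 0 < s -> 0 < t -> tangent_gap s t (/ t) = (t - s) ^ 2 / (t * s).
Proof. intros; unfold tangent_gap; field; lra. Qed.

Lemma tangent_gap_hyperbola_ge0 s t : 0 < s -> 0 < t -> 0 <= tangent_gap s t (/ t).
Proof.
  intros; rewrite tangent_gap_hyperbola by assumption.
  apply Rle_mult_inv_pos; [apply pow2_ge_0 | apply Rmult_lt_0_compat; assumption].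
Qed.

Lemma tangent_gap_hyperbola_lower s t : 1 <= s <= 2 -> 1 <= t <= 2 ->
  (t - s) ^ 2 / 4 <= tangent_gap s t (/ t).
Proof.
  intros Hs Ht; rewrite tangent_gap_hyperbola by lra; unfold Rdiv.
  apply Rmult_le_compat_l; [apply pow2_ge_0|].
  apply Rinv_le_contravar; [apply Rmult_lt_0_compat |]; nra.
Qed.

Lemma tangent_gap_hyp_param_sep al a : 0 <= al <= 1 -> 0 <= a <= 1 ->
  (a - al) ^ 2 * al ^ 2 / (4 * 81 * 1024) <= tangent_gap (hyp_param al) (hyp_param a) (/ hyp_param a).
Proof.
  intros Hal Ha.
  pose proof (hyp_param_range al Hal); pose proof (hyp_param_range a Ha).
  pose proof (normal_ratio_sep al a Hal Ha) as Hsep.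
  rewrite <- (hyp_param_pow4 al), <- (hyp_param_pow4 a) in Hsep by assumption.
  pose proof (pow4_diff_sq (hyp_param al) (hyp_param a) ltac:(lra) ltac:(lra)).
  pose proof (tangent_gap_hyperbola_lower (hyp_param al) (hyp_param a) ltac:(lra) ltac:(lra)).
  replace ((a - al) ^ 2) with ((al - a) ^ 2) by ring.
  lra.
Qed.

Definition plane_x2 : vec3 -> Prop :=
  halfspace_inter (fun c c0 => c0 = 0 /\ (c = (0, 1, 0) \/ c = (0, -1, 0))).

Definition axis_x3 : vec3 -> Prop :=
  halfspace_inter (fun c c0 => c0 = 0 /\
    (c = (0, 1, 0) \/ c = (0, -1, 0) \/ c = (1, 0, 0) \/ c = (-1, 0, 0))).

Definition whole3 : vec3 -> Prop := fun _ => True.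

Lemma in_plane_x2 x1 x2 x3 : plane_x2 (x1, x2, x3) <-> x2 = 0.
Proof.
  split.
  - intro H; pose proof (H (0, 1, 0) 0 (conj eq_refl (or_introl eq_refl)));
      pose proof (H (0, -1, 0) 0 (conj eq_refl (or_intror eq_refl))); simpl in *; lra.
  - intros -> c c0 [-> [-> | ->]]; simpl; lra.
Qed.

Lemma in_axis_x3 x1 x2 x3 : axis_x3 (x1, x2, x3) <-> x1 = 0 /\ x2 = 0.
Proof.
  split.
  - intro H.
    pose proof (H (0, 1, 0) 0 (conj eq_refl (or_introl eq_refl))).
    pose proof (H (0, -1, 0) 0 (conj eq_refl (or_intror (or_introl eq_refl)))).
    pose proof (H (1, 0, 0) 0 (conj eq_refl (or_intror (or_intror (or_introl eq_refl))))).
    pose proof (H (-1, 0, 0) 0 (conj eq_refl (or_intror (or_intror (or_intror eq_refl))))).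
    simpl in *; lra.
  - intros [-> ->] c c0 [-> [-> | [-> | [-> | ->]]]]; simpl; lra.
Qed.

Lemma whole3_closed : closed3 whole3.
Proof. intros x Hx; exfalso; apply Hx; exact I. Qed.

Lemma whole3_convex : convex3 whole3.
Proof. intros x y t _ _ _; exact I. Qed.

Lemma relaxed_proj_plane_x2 al x1 x2 x3 :
  relaxed_proj al plane_x2 (x1, x2, x3) = (x1, (1 - al) * x2, x3).
Proof.
  unfold relaxed_proj; rewrite (proj_eq plane_x2 (x1, x2, x3) (x1, 0, x3)).
  - simpl; apply vec3_eq; ring.
  - apply halfspace_inter_convex.
  - apply in_plane_x2; reflexivity.
  - intros [[a1 a2] a3] Ha; apply in_plane_x2 in Ha; subst; simpl; lra.
Qed.

Lemma relaxed_proj_axis_x3 al x1 x2 x3 :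
  relaxed_proj al axis_x3 (x1, x2, x3) = ((1 - al) * x1, (1 - al) * x2, x3).
Proof.
  unfold relaxed_proj; rewrite (proj_eq axis_x3 (x1, x2, x3) (0, 0, x3)).
  - simpl; apply vec3_eq; ring.
  - apply halfspace_inter_convex.
  - apply in_axis_x3; split; reflexivity.
  - intros [[a1 a2] a3] Ha; apply in_axis_x3 in Ha as [-> ->]; simpl; lra.
Qed.

Lemma relaxed_proj_whole3 al x : relaxed_proj al whole3 x = x.
Proof.
  unfold relaxed_proj; rewrite (proj_eq whole3 x x whole3_convex I).
  - destruct x as [[? ?] ?]; simpl; apply vec3_eq; ring.
  - intros [[a1 a2] a3] _; destruct x as [[? ?] ?]; simpl; lra.
Qed.

Lemma relaxed_proj_0 B x : relaxed_proj 0 B x = x.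
Proof.
  unfold relaxed_proj; destruct (proj B x) as [[? ?] ?], x as [[? ?] ?]; simpl.
  apply vec3_eq; ring.
Qed.

Lemma comp_relaxed_0 A n x : comp_relaxed A 0 n x = x.
Proof. induction n as [|n IH]; simpl; [|rewrite relaxed_proj_0]; auto. Qed.

(* A cut (N, s, A) is the half-space z >= N - A (u/s + s v - 2); it is admissible when it is
   harmless above the hyperbola points of all parameters in C_0 ∪ ... ∪ C_N.  The bound
   N^2 <= A keeps the points (t + e, 1/t + e, 1/e) in the set for all cuts. *)
Definition admissible_cut (C : nat -> R -> Prop) (N : nat) (s A : R) : Prop :=
  0 < s /\ INR N ^ 2 <= A /\
  forall a, 0 <= a <= 1 -> (exists n, (n <= N)%nat /\ C n a) ->
    INR N <= A * tangent_gap s (hyp_param a) (/ hyp_param a).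

Definition hyperbolic_set (C : nat -> R -> Prop) : vec3 -> Prop :=
  halfspace_inter (fun c c0 =>
    (exists s, 0 < s /\ c = (/ s, s, 0) /\ c0 = 2) \/
    (exists N s A, admissible_cut C N s A /\ c = (A / s, A * s, 1) /\ c0 = INR N + 2 * A)).

Lemma in_hyperbolic_set C u v z : hyperbolic_set C (u, v, z) <->
  (forall s, 0 < s -> 0 <= tangent_gap s u v) /\
  (forall N s A, admissible_cut C N s A -> INR N <= A * tangent_gap s u v + z).
Proof.
  unfold tangent_gap; split.
  - intro H; split.
    + intros s Hs.
      specialize (H (/ s, s, 0) 2 (or_introl (ex_intro _ s (conj Hs (conj eq_refl eq_refl))))).
      simpl in H; unfold Rdiv; lra.
    + intros N s A HNsA.
      specialize (H (A / s, A * s, 1) (INR N + 2 * A)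
        (or_intror (ex_intro _ N (ex_intro _ s (ex_intro _ A (conj HNsA (conj eq_refl eq_refl))))))).
      simpl in H; unfold Rdiv in *; lra.
  - intros [Hhyp Hcut] c c0 [[s [Hs [-> ->]]] | [N [s [A [HNsA [-> ->]]]]]]; simpl.
    + specialize (Hhyp s Hs); unfold Rdiv in Hhyp; lra.
    + specialize (Hcut N s A HNsA); unfold Rdiv in *; lra.
Qed.

Lemma hyperbolic_set_near C t e : 0 < t -> 0 < e -> hyperbolic_set C (t + e, / t + e, / e).
Proof.
  intros Ht He.
  assert (Hgap : forall s, 0 < s -> 2 * e <= tangent_gap s (t + e) (/ t + e)).
  { intros s Hs; pose proof (tangent_gap_hyperbola_ge0 s t Hs Ht).
    assert (2 <= / s + s).
    { replace (/ s + s) with ((s - 1) ^ 2 / s + 2) by (field; lra).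
      pose proof (Rle_mult_inv_pos _ _ (pow2_ge_0 (s - 1)) Hs); lra. }
    replace (tangent_gap s (t + e) (/ t + e)) with (tangent_gap s t (/ t) + e * (/ s + s))
      by (unfold tangent_gap; field; lra).
    nra. }
  apply in_hyperbolic_set; split.
  - intros s Hs; specialize (Hgap s Hs); lra.
  - intros N s A [Hs [HA _]]; specialize (Hgap s Hs).
    (* AM-GM: 2 N^2 e + 1/e >= 2 sqrt 2 N >= N *)
    assert (HNe : INR N * e <= 2 * (INR N * e) ^ 2 + 1) by nra.
    assert (INR N ^ 2 * (2 * e) <= A * tangent_gap s (t + e) (/ t + e))
      by (apply Rmult_le_compat; try apply pow2_ge_0; lra).
    apply Rmult_le_reg_r with e; [exact He|].
    rewrite Rmult_plus_distr_r, Rinv_l by lra; nra.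
Qed.

Lemma hyperbolic_set_nonempty C : nonempty3 (hyperbolic_set C).
Proof. exists (1 + 1, / 1 + 1, / 1); apply hyperbolic_set_near; lra. Qed.

Lemma hyperbola_point_in C al n : 0 <= al <= 1 -> C n al ->
  hyperbolic_set C (hyp_param al, / hyp_param al, INR n).
Proof.
  intros Hal Hn; pose proof (hyp_param_range al Hal).
  apply in_hyperbolic_set; split.
  - intros s Hs; apply tangent_gap_hyperbola_ge0; lra.
  - intros N s A (Hs & HA & Hcut).
    assert (Hgap : 0 <= A * tangent_gap s (hyp_param al) (/ hyp_param al)).
    { apply Rmult_le_pos; [pose proof (pow2_ge_0 (INR N)); lra|].
      apply tangent_gap_hyperbola_ge0; lra. }
    pose proof (pos_INR n); destruct (Nat.le_gt_cases n N) as [HnN | HNn].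
    + specialize (Hcut al Hal (ex_intro _ n (conj HnN Hn))); lra.
    + apply lt_INR in HNn; lra.
Qed.

Lemma closed_union_avoid (C : nat -> R -> Prop) al :
  (forall n, closed_set (C n)) -> (forall n, ~ C n al) ->
  forall N, exists rho, 0 < rho /\
    forall a, Rabs (a - al) < rho -> forall n, (n <= N)%nat -> ~ C n a.
Proof.
  intros HC HnC N; induction N as [|N [r [Hr IH]]].
  - destruct (HC 0%nat al (HnC 0%nat)) as [d Hd]; exists d; split; [apply cond_pos|].
    intros a Ha n Hn; replace n with 0%nat by lia; exact (Hd a Ha).
  - destruct (HC (S N) al (HnC (S N))) as [d Hd].
    exists (Rmin r d); split; [apply Rmin_pos; [exact Hr | apply cond_pos]|].
    intros a Ha n Hn; destruct (Nat.eq_dec n (S N)) as [-> | HnN].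
    + apply (Hd a); unfold disc; eapply Rlt_le_trans; [exact Ha | apply Rmin_r].
    + apply (IH a); [eapply Rlt_le_trans; [exact Ha | apply Rmin_l] | lia].
Qed.

Lemma admissible_cut_far C N al rho : 0 < al <= 1 -> 0 < rho ->
  (forall a, Rabs (a - al) < rho -> forall n, (n <= N)%nat -> ~ C n a) ->
  admissible_cut C N (hyp_param al)
    (INR N ^ 2 + INR N / (rho ^ 2 * al ^ 2 / (4 * 81 * 1024))).
Proof.
  intros Hal Hrho Hfar; pose proof (hyp_param_range al ltac:(lra)).
  set (m := rho ^ 2 * al ^ 2 / (4 * 81 * 1024)).
  assert (Hm : 0 < m) by (unfold m; apply Rdiv_lt_0_compat; [apply Rmult_lt_0_compat; apply pow_lt|]; lra).
  pose proof (pos_INR N); assert (0 <= INR N / m) by (apply Rle_mult_inv_pos; lra).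
  split; [lra | split; [lra|]].
  intros a Ha [n [HnN HCa]].
  assert (Hsep : m <= tangent_gap (hyp_param al) (hyp_param a) (/ hyp_param a)).
  { eapply Rle_trans; [|apply tangent_gap_hyp_param_sep; lra].
    assert (rho <= Rabs (a - al)) by (apply Rnot_lt_le; intro Hlt; exact (Hfar a Hlt n HnN HCa)).
    assert (rho ^ 2 <= (a - al) ^ 2) by (rewrite <- (pow2_abs (a - al)); apply pow_incr; lra).
    unfold m, Rdiv; apply Rmult_le_compat_r; [lra|].
    apply Rmult_le_compat_r; [apply pow2_ge_0 | lra]. }
  assert (HN : INR N <= INR N / m * tangent_gap (hyp_param al) (hyp_param a) (/ hyp_param a)).
  { replace (INR N) with (INR N / m * m) at 1 by (field; lra).
    apply Rmult_le_compat_l; lra. }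
  assert (0 <= INR N ^ 2 * tangent_gap (hyp_param al) (hyp_param a) (/ hyp_param a)) by
    (apply Rmult_le_pos; [apply pow2_ge_0 | lra]).
  lra.
Qed.

Lemma hyperbola_point_not_in C al z : (forall n, closed_set (C n)) -> 0 < al <= 1 ->
  (forall n, ~ C n al) -> ~ hyperbolic_set C (hyp_param al, / hyp_param al, z).
Proof.
  intros HC Hal HnC Hin; pose proof (hyp_param_range al ltac:(lra)).
  destruct (INR_archimed 1 z ltac:(lra)) as [N HN]; rewrite Rmult_1_r in HN.
  destruct (closed_union_avoid C al HC HnC N) as [rho [Hrho Hfar]].
  apply in_hyperbolic_set in Hin as [_ Hcut].
  specialize (Hcut N _ _ (admissible_cut_far C N al rho Hal Hrho Hfar)).
  rewrite tangent_gap_hyperbola, Rminus_diag in Hcut by lra.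
  unfold Rdiv in Hcut; rewrite pow_ne_zero, !Rmult_0_l, Rmult_0_r in Hcut by lia.
  lra.
Qed.

Lemma relaxed_proj_axis_plane al x1 x2 x3 :
  relaxed_proj al axis_x3 (relaxed_proj al plane_x2 (x1, x2, x3)) =
  ((1 - al) * x1, (1 - al) ^ 2 * x2, x3).
Proof.
  rewrite relaxed_proj_plane_x2, relaxed_proj_axis_x3; apply vec3_eq; ring.
Qed.

Lemma fixed_point_residual al x1 x2 x3 p1 p2 p3 : 0 < al <= 1 ->
  vadd (vscale al (p1, p2, p3)) (vscale (1 - al) ((1 - al) * x1, (1 - al) ^ 2 * x2, x3)) =
    (x1, x2, x3) ->
  vsub ((1 - al) * x1, (1 - al) ^ 2 * x2, x3) (p1, p2, p3) =
    (- (p1 / (2 - al)), - (normal_ratio al * p2 / (2 - al)), 0).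
Proof.
  intros Hal Hfix; simpl in Hfix; injection Hfix as E1 E2 E3.
  assert (Hx1 : x1 = p1 / (2 - al)).
  { apply Rmult_eq_reg_l with (al * (2 - al)); [|nra].
    replace (al * (2 - al) * (p1 / (2 - al))) with (al * p1) by (field; lra); nra. }
  assert (Hx2 : x2 = p2 / (1 + (1 - al) + (1 - al) ^ 2)).
  { apply Rmult_eq_reg_l with (al * (1 + (1 - al) + (1 - al) ^ 2)); [|nra].
    replace (al * (1 + (1 - al) + (1 - al) ^ 2) * (p2 / (1 + (1 - al) + (1 - al) ^ 2)))
      with (al * p2) by (field; nra); nra. }
  assert (Hx3 : x3 = p3) by (apply Rmult_eq_reg_l with al; lra).
  unfold normal_ratio; subst; simpl; apply vec3_eq; field; nra.
Qed.

Lemma lifted_point_fixed al p1 p2 p3 : 0 < al <= 1 ->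
  vadd (vscale al (p1, p2, p3))
    (vscale (1 - al) ((1 - al) * (p1 / (2 - al)),
                      (1 - al) ^ 2 * (p2 / (1 + (1 - al) + (1 - al) ^ 2)), p3)) =
  (p1 / (2 - al), p2 / (1 + (1 - al) + (1 - al) ^ 2), p3).
Proof. intro Hal; simpl; apply vec3_eq; field; nra. Qed.

Lemma nonneg_of_perturb c d : (forall e, 0 < e -> 0 <= c + e * d) -> 0 <= c.
Proof.
  intro H; apply Rnot_lt_le; intro Hc; pose proof (Rabs_pos d).
  set (e := - c / (2 * (Rabs d + 1))).
  assert (He : 0 < e) by (unfold e; apply Rdiv_lt_0_compat; lra).
  specialize (H e He).
  assert (e * d <= e * Rabs d) by (apply Rmult_le_compat_l; [lra | apply Rle_abs]).
  assert (e * (Rabs d + 1) = - c / 2) by (unfold e; field; lra).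
  lra.
Qed.

Lemma normal_forces_tangency t p1 p2 : 0 < t -> 0 <= tangent_gap t p1 p2 ->
  0 <= p1 * (t - p1) + t ^ 4 * p2 * (/ t - p2) -> p1 = t /\ p2 = / t.
Proof.
  intros Ht Hgap Hnormal; unfold tangent_gap in Hgap.
  assert (Hsum : p1 * (t - p1) + t ^ 4 * p2 * (/ t - p2) + t ^ 2 * (p1 / t + t * p2 - 2)
                 = - (t - p1) ^ 2 - t ^ 4 * (/ t - p2) ^ 2) by (field; lra).
  assert (0 <= t ^ 2 * (p1 / t + t * p2 - 2)) by (apply Rmult_le_pos; [apply pow2_ge_0 | lra]).
  pose proof (pow2_ge_0 (t - p1)); pose proof (pow2_ge_0 (/ t - p2)); pose proof (pow_lt t 4 Ht).
  assert (Ht4 : t ^ 4 * (/ t - p2) ^ 2 = 0) by nra.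
  apply Rmult_integral in Ht4 as [Ht4 | Ht4]; [lra|].
  split; apply Rminus_diag_uniq_sym, Rsqr_0_uniq; rewrite Rsqr_pow2; [nra | exact Ht4].
Qed.

Lemma hyperbolic_comp_fixed C al n : 0 < al <= 1 -> C n al ->
  exists x, relaxed_proj al (hyperbolic_set C)
              (relaxed_proj al axis_x3 (relaxed_proj al plane_x2 x)) = x.
Proof.
  intros Hal Hn; pose proof (hyp_param_range al ltac:(lra)); set (t := hyp_param al) in *.
  pose proof (lifted_point_fixed al t (/ t) (INR n) Hal) as Hlift.
  set (x := (t / (2 - al), / t / (1 + (1 - al) + (1 - al) ^ 2), INR n)) in *.
  set (y := ((1 - al) * (t / (2 - al)), (1 - al) ^ 2 * (/ t / (1 + (1 - al) + (1 - al) ^ 2)), INR n)).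
  assert (Hres := fixed_point_residual al _ _ _ _ _ _ Hal Hlift).
  rewrite <- hyp_param_pow4 in Hres by lra; fold t y in Hres.
  assert (Hp : proj (hyperbolic_set C) y = (t, / t, INR n)).
  { apply proj_eq; [apply halfspace_inter_convex | apply hyperbola_point_in; [lra | exact Hn] |].
    intros [[a1 a2] a3] Ha; rewrite Hres.
    apply in_hyperbolic_set in Ha as [Hgap _]; specialize (Hgap t ltac:(lra)).
    (* y - p is a negative multiple of the normal (1/t, t, 0) of the tangent line at (t, 1/t) *)
    replace (inner (- (t / (2 - al)), - (t ^ 4 * / t / (2 - al)), 0) (vsub (a1, a2, a3) (t, / t, INR n)))
      with (- (t ^ 2 / (2 - al)) * tangent_gap t a1 a2) by (unfold tangent_gap; simpl; field; lra).
    assert (0 <= t ^ 2 / (2 - al)) by (apply Rle_mult_inv_pos; [apply pow2_ge_0 | lra]).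
    nra. }
  exists x; unfold x at 1; rewrite relaxed_proj_axis_plane; fold y.
  unfold relaxed_proj; rewrite Hp; exact Hlift.
Qed.

Lemma hyperbolic_comp_no_fixed C al x : (forall n, closed_set (C n)) -> 0 < al <= 1 ->
  (forall n, ~ C n al) ->
  relaxed_proj al (hyperbolic_set C) (relaxed_proj al axis_x3 (relaxed_proj al plane_x2 x)) <> x.
Proof.
  intros HC Hal HnC Hfix; destruct x as [[x1 x2] x3]; rewrite relaxed_proj_axis_plane in Hfix.
  set (y := ((1 - al) * x1, (1 - al) ^ 2 * x2, x3)) in *.
  assert (Hnear := proj_nearest (hyperbolic_set C) y (hyperbolic_set_nonempty C)
                     (halfspace_inter_convex _) (halfspace_inter_closed _)).
  assert (Hvar := nearest_variational _ _ _ (halfspace_inter_convex _) Hnear).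
  destruct Hnear as [Hin _]; unfold relaxed_proj in Hfix.
  destruct (proj (hyperbolic_set C) y) as [[p1 p2] p3].
  unfold y in Hvar; rewrite (fixed_point_residual al x1 x2 x3 p1 p2 p3 Hal Hfix) in Hvar.
  pose proof (hyp_param_range al ltac:(lra)); set (t := hyp_param al) in *.
  assert (Hratio : normal_ratio al = t ^ 4) by (symmetry; apply hyp_param_pow4; lra).
  assert (Htan : p1 = t /\ p2 = / t).
  { apply normal_forces_tangency; [lra | apply in_hyperbolic_set in Hin; apply Hin; lra |].
    apply nonneg_of_perturb with (p1 + t ^ 4 * p2); intros e He.
    specialize (Hvar _ (hyperbolic_set_near C t e ltac:(lra) He)); simpl in Hvar.
    rewrite Hratio in Hvar.
    apply Rmult_le_reg_l with (/ (2 - al)); [apply Rinv_0_lt_compat; lra|].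
    rewrite Rmult_0_r; unfold Rdiv in Hvar; nra. }
  destruct Htan as [-> ->].
  exact (hyperbola_point_not_in C al p3 HC Hal HnC Hin).
Qed.

Definition construction (C : nat -> R -> Prop) (i : nat) : vec3 -> Prop :=
  match i with
  | 1%nat => plane_x2
  | 2%nat => axis_x3
  | 3%nat => hyperbolic_set C
  | _ => whole3
  end.

Lemma construction_nonempty_convex_closed C i :
  nonempty3 (construction C i) /\ convex3 (construction C i) /\ closed3 (construction C i).
Proof.
  destruct i as [|[|[|[|i]]]]; simpl;
    try (split; [exists (0, 0, 0); exact I | exact (conj whole3_convex whole3_closed)]);
    (split; [| exact (conj (halfspace_inter_convex _) (halfspace_inter_closed _))]).
  - exists (0, 0, 0); apply in_plane_x2; reflexivity.
  - exists (0, 0, 0); apply in_axis_x3; split; reflexivity.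
  - apply hyperbolic_set_nonempty.
Qed.

Lemma comp_relaxed_construction C al k x : (3 <= k)%nat ->
  comp_relaxed (construction C) al k x =
  relaxed_proj al (hyperbolic_set C) (relaxed_proj al axis_x3 (relaxed_proj al plane_x2 x)).
Proof.
  induction k as [|k IH]; intro Hk; [lia|].
  destruct (Nat.eq_dec k 2) as [-> | Hk2]; [reflexivity|].
  cbn [comp_relaxed]; replace (construction C (S k)) with whole3
    by (destruct k as [|[|[|k]]]; [lia | lia | lia | reflexivity]).
  rewrite relaxed_proj_whole3; apply IH; lia.
Qed.

Theorem proposition2 (F : R -> Prop)
  (HF01 : forall a, F a -> 0 <= a <= 1)
  (HFs : F_sigma F)
  (HF0 : F 0)
  (k : nat) (hk : (3 <= k)%nat) :
  exists A : nat -> vec3 -> Prop,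
    (forall i, (1 <= i <= k)%nat -> nonempty3 (A i) /\ convex3 (A i) /\ closed3 (A i)) /\
    (forall alpha, F alpha <->
       (0 <= alpha <= 1 /\ exists x, comp_relaxed A alpha k x = x)).
Proof.
  destruct HFs as [C [HC HFC]].
  exists (construction C); split; [intros i _; apply construction_nonempty_convex_closed|].
  intro al; split.
  - intro HFal; split; [exact (HF01 al HFal)|].
    destruct (Req_dec al 0) as [-> | Hal0].
    + exists (0, 0, 0); apply comp_relaxed_0.
    + destruct (proj1 (HFC al) HFal) as [n Hn].
      destruct (hyperbolic_comp_fixed C al n ltac:(pose proof (HF01 al HFal); lra) Hn) as [x Hx].
      exists x; rewrite comp_relaxed_construction; assumption.
  - intros [Hal [x Hx]]; apply NNPP; intro HnF.
    assert (al <> 0) by (intros ->; exact (HnF HF0)).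
    apply (hyperbolic_comp_no_fixed C al x HC ltac:(lra)).
    + intros n Hn; apply HnF, HFC; exists n; exact Hn.
    + rewrite <- (comp_relaxed_construction C al k x hk); exact Hx.
Qed.
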